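(* In any $\{K_3,K_4\}$-decomposition of $K_{18}$ with $\alpha=11$, every vertex $x$ of $K_{18}$ satisfies $\alpha_x\in\{1,4\}$.
   Context: A $\{K_3,K_4\}$-decomposition of $K_v$ is a collection of subgraphs, each isomorphic to $K_3$ or $K_4$ (triples and quadruples), such that every edge of $K_v$ lies in exactly one of them. $\alpha$ is the number of copies of $K_3$ in the decomposition, and for a vertex $x$, $\alpha_x$ is the number of copies of $K_3$ in the decomposition containing $x$. *)

From mathcomp Require Import all_boot.
Set Implicit Arguments. Unset Strict Implicit. Unset Printing Implicit Defensive.

(* A {K3,K4}-decomposition of K_v, vertices 'I_v: a set D of blocks (vertex
   sets of the copies of K3 / K4), each of size 3 or 4, such that every edge
   {x,y} (x != y) of K_v lies in exactly one block. *)
Definition K34_decomposition (v : nat) (D : {set {set 'I_v}}) : Prop :=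
  (forall B, B \in D -> (#|B| == 3) || (#|B| == 4)) /\
  (forall x y : 'I_v, x != y -> #|[set B in D | (x \in B) && (y \in B)]| = 1).

Definition alpha (v : nat) (D : {set {set 'I_v}}) : nat :=
  #|[set B in D | #|B| == 3]|.

Definition alpha_at (v : nat) (D : {set {set 'I_v}}) (x : 'I_v) : nat :=
  #|[set B in D | (#|B| == 3) && (x \in B)]|.

From mathcomp Require Import all_boot zify.

Set Implicit Arguments. Unset Strict Implicit. Unset Printing Implicit Defensive.

(* Counting the edges at a vertex y gives 2 alpha_y + 3 q_y = 17, where q_y
   is the number of quadruples through y, so alpha_y is 1, 4 or 7 and is
   always 1 mod 3.  Suppose alpha_x = 7; then q_x = 1 and only 4 triples miss
   x.  Let e_y be the number of those triples through y and n_y the number of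
   quadruples through x and y.  Since alpha_y = e_y + 1 - n_y is 1 mod 3 for
   y <> x, either e_y <= n_y or e_y >= 3, and two of the four triples share at
   most one vertex, so e_y >= 3 happens for at most one y.  Hence
   12 = sum e_y <= 4 + sum n_y = 4 + 4 q_x = 8, a contradiction. *)

Lemma sum_le_one_exception (I : finType) (f g : I -> nat) (c : nat) :
  (forall i, f i <= c) ->
  (forall i j, g i < f i -> g j < f j -> i = j) ->
  \sum_i f i <= c + \sum_i g i.
Proof.
move=> f_le_c exc_uniq.
have f_le_g i0 i : i != i0 -> g i0 < f i0 -> f i <= g i.
  move=> neq_i exc_i0; rewrite leqNgt; apply/negP => exc_i.
  by move: neq_i; rewrite (exc_uniq _ _ exc_i exc_i0) eqxx.
case: (pickP (fun i => g i < f i)) => [i0 exc_i0 | no_exc].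
  rewrite (bigD1 i0) //= [X in _ <= _ + X](bigD1 i0) //=.
  apply: leq_add; first exact: f_le_c.
  apply: leq_trans (leq_addl _ _).
  by apply: leq_sum => i neq_i; apply: f_le_g neq_i exc_i0.
apply: leq_trans (leq_addl _ _); apply: leq_sum => i _.
by rewrite leqNgt no_exc.
Qed.

Section BlockCounting.
Variables (T : finType) (D : {set {set T}}).

Definition nblocks (P : pred {set T}) : nat := #|[set B in D | P B]|.

Lemma nblocksE P : nblocks P = \sum_(B in D) P B.
Proof.
rewrite /nblocks -sum1_card big_mkcond [RHS]big_mkcond /=.
by apply: eq_bigr => B _; rewrite inE; case: (B \in D); case: (P B).
Qed.

Lemma sum_nblocks_through P :
  \sum_y nblocks (fun B => P B && (y \in B)) = \sum_(B in D) P B * #|B|.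
Proof.
under eq_bigr do rewrite nblocksE.
rewrite exchange_big /=; apply: eq_bigr => B _.
rewrite -sum1_card big_distrr /= [RHS]big_mkcond /=.
by apply: eq_bigr => y _; case: (P B); case: (y \in B).
Qed.

End BlockCounting.

Section K34Decomposition.
Variables (v : nat) (D : {set {set 'I_v}}).
Hypothesis decD : K34_decomposition D.

Definition quad_at x := nblocks D (fun B => (#|B| == 4) && (x \in B)).
Definition quad_at2 x y := nblocks D (fun B => (#|B| == 4) && (x \in B) && (y \in B)).
Definition triples_missing x := nblocks D (fun B => (#|B| == 3) && (x \notin B)).
Definition triples_missing_at x y :=
  nblocks D (fun B => (#|B| == 3) && (x \notin B) && (y \in B)).

Lemma alpha_atE x : alpha_at D x = nblocks D (fun B => (#|B| == 3) && (x \in B)).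
Proof. by []. Qed.

Lemma alphaE : alpha D = nblocks D (fun B => #|B| == 3).
Proof. by []. Qed.

Lemma block_size B : B \in D -> #|B| = 3 \/ #|B| = 4.
Proof. by case: decD => sizeD _ /sizeD /orP[] /eqP ->; [left | right]. Qed.

Lemma nblocks_pair x y : x != y -> nblocks D (fun B => (x \in B) && (y \in B)) = 1.
Proof. by case: decD => _; apply. Qed.

Lemma vertex_degree x : 2 * alpha_at D x + 3 * quad_at x = v.-1.
Proof.
have := sum_nblocks_through D (fun B => x \in B).
rewrite (bigD1 x) //= (eq_bigr (fun _ => 1)); last first.
  by move=> y; rewrite eq_sym => /nblocks_pair.
rewrite sum1_card cardC1 card_ord.
have -> : \sum_(B in D) (x \in B) * #|B| =
    nblocks D (fun B => (x \in B) && (x \in B)) + (2 * alpha_at D x + 3 * quad_at x).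
  rewrite alpha_atE /quad_at !nblocksE !big_distrr -!big_split /=.
  by apply: eq_bigr => B /block_size [] ->; case: (x \in B).
by move/addnI.
Qed.

Lemma alpha_at_mod3 : 3 %| v -> forall y, alpha_at D y = 1 %[mod 3].
Proof. by move=> dvd3v y; have := vertex_degree y; have := ltn_ord y; lia. Qed.

Lemma alpha_at_add_triples_missing x : alpha_at D x + triples_missing x = alpha D.
Proof.
rewrite alpha_atE alphaE /triples_missing !nblocksE -big_split /=.
by apply: eq_bigr => B _; case: (#|B| == 3); case: (x \in B).
Qed.

Lemma alpha_at_add_quad_at2 x y :
  x != y -> alpha_at D y + quad_at2 x y = triples_missing_at x y + 1.
Proof.
move/nblocks_pair => <-.
rewrite alpha_atE /quad_at2 /triples_missing_at !nblocksE -!big_split /=.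
by apply: eq_bigr => B /block_size [] ->; case: (x \in B); case: (y \in B).
Qed.

Lemma quad_at2_le1 x y : x != y -> quad_at2 x y <= 1.
Proof.
move/nblocks_pair => <-; rewrite /quad_at2 !nblocksE.
by apply: leq_sum => B _; case: (#|B| == 4); case: (x \in B); case: (y \in B).
Qed.

Lemma triples_missing_at_le x y : triples_missing_at x y <= triples_missing x.
Proof.
rewrite /triples_missing_at /triples_missing !nblocksE.
by apply: leq_sum => B _; case: (#|B| == 3); case: (x \in B); case: (y \in B).
Qed.

Lemma triples_missing_at_self x : triples_missing_at x x = 0.
Proof.
by rewrite /triples_missing_at nblocksE big1 // => B _; case: (x \in B); rewrite ?andbF.
Qed.

Lemma triples_missing_at_pair x y z : y != z ->
  triples_missing_at x y + triples_missing_at x z <= triples_missing x + 1.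
Proof.
move/nblocks_pair => <-.
rewrite /triples_missing_at /triples_missing !nblocksE -!big_split /=.
apply: leq_sum => B _.
by case: (#|B| == 3); case: (x \in B); case: (y \in B); case: (z \in B).
Qed.

Lemma sum_triples_missing_at x : \sum_y triples_missing_at x y = 3 * triples_missing x.
Proof.
rewrite sum_nblocks_through /triples_missing nblocksE big_distrr /=.
by apply: eq_bigr => B _; case: eqP => [->|_] //; exact: mulnC.
Qed.

Lemma sum_quad_at2 x : \sum_y quad_at2 x y = 4 * quad_at x.
Proof.
rewrite sum_nblocks_through /quad_at nblocksE big_distrr /=.
by apply: eq_bigr => B _; case: eqP => [->|_] //; exact: mulnC.
Qed.

Lemma triples_missing_le_quad x :
  (forall y, alpha_at D y = 1 %[mod 3]) ->
  triples_missing x <= 4 -> triples_missing x <= 2 * quad_at x.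
Proof.
move=> alpha_mod3 missing_le4.
have large y : quad_at2 x y < triples_missing_at x y -> 3 <= triples_missing_at x y.
  have [<-|neq_xy] := eqVneq x y; first by rewrite triples_missing_at_self.
  have := alpha_at_add_quad_at2 neq_xy; have := quad_at2_le1 neq_xy.
  by have := alpha_mod3 y; lia.
have unique_large y z : quad_at2 x y < triples_missing_at x y ->
    quad_at2 x z < triples_missing_at x z -> y = z.
  move=> /large large_y /large large_z; case: (eqVneq y z) => // neq_yz.
  by have := triples_missing_at_pair x neq_yz; lia.
have := sum_le_one_exception (triples_missing_at_le x) unique_large.
by rewrite sum_triples_missing_at sum_quad_at2; lia.
Qed.

End K34Decomposition.

Theorem mainTheorem6 (D : {set {set 'I_18}}) :
  K34_decomposition D -> alpha D = 11 ->
  forall x : 'I_18, (alpha_at D x = 1) \/ (alpha_at D x = 4).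
Proof.
move=> decD alphaD x.
have := vertex_degree decD x.
have := alpha_at_add_triples_missing D x.
have := triples_missing_le_quad (x := x) decD (alpha_at_mod3 decD isT).
lia.
Qed.
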